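(* Let $\boldsymbol{\mathcal{A}}\in\mathbb{C}^{N\times N\times M\times M}$ and $\mathbf{v},\mathbf{w}\in\mathbb{C}^N$ with $\mathbf{w}^H\mathbf{v}=1$, and run the tensor non-Hermitian Lanczos process (described in the context) with arbitrary nonsingular choices $\boldsymbol{\gamma}_2,\boldsymbol{\gamma}_3,\dots$. Let $n\ge1$ and suppose $\boldsymbol{\beta}_2,\dots,\boldsymbol{\beta}_n$ are all nonsingular, so that $V_1,\dots,V_n$, $W_1^D,\dots,W_n^D$ and $\boldsymbol{\alpha}_1,\dots,\boldsymbol{\alpha}_n$ are defined. Then: (a) $W_k^D*V_j=\delta_{kj}I_M$ for all $1\le j,k\le n$, i.e. $\boldsymbol{\mathcal{W}}_n*\boldsymbol{\mathcal{V}}_n=\boldsymbol{\mathcal{I}}_*\in\mathbb{C}^{n\times n\times M\times M}$; (b) $\langle V_1,\dots,V_n\rangle=\mathcal{K}_n(\boldsymbol{\mathcal{A}},V)$ and $\langle W_1^D,\dots,W_n^D\rangle=\mathcal{K}_n^D(W^D,\boldsymbol{\mathcal{A}})$; (c) $\boldsymbol{\mathcal{T}}_n=\boldsymbol{\mathcal{W}}_n*\boldsymbol{\mathcal{A}}*\boldsymbol{\mathcal{V}}_n$.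
   Context: Slicing and products: for a 4-mode tensor, $\boldsymbol{\mathcal{A}}_{i_1,i_2,:,:}$ denotes the $M\times M$ matrix slice; for a 3-mode tensor, $A_{i,:,:}$ likewise. $*$-tensor product: $(\boldsymbol{\mathcal{A}}*\boldsymbol{\mathcal{B}})_{i_1,i_2,:,:}=\sum_k\boldsymbol{\mathcal{A}}_{i_1,k,:,:}\boldsymbol{\mathcal{B}}_{k,i_2,:,:}$. Tensor-hypervector product: $(\boldsymbol{\mathcal{A}}*A)_{i,:,:}=\sum_k\boldsymbol{\mathcal{A}}_{i,k,:,:}A_{k,:,:}$; left action of a 3-mode tensor $B^D$ (superscript $D$ marks tensors acting from the left): $(B^D*\boldsymbol{\mathcal{A}})^D_{i,:,:}=\sum_k B^D_{k,:,:}\boldsymbol{\mathcal{A}}_{k,i,:,:}$; hypervector inner product $B^D*A=\sum_kB^D_{k,:,:}A_{k,:,:}\in\mathbb{C}^{M\times M}$. These products are associative. For $\boldsymbol{\alpha}\in\mathbb{C}^{M\times M}$ and a 3-mode tensor $A$: $(A\times\boldsymbol{\alpha})_{i,:,:}=A_{i,:,:}\boldsymbol{\alpha}$, $(\boldsymbol{\alpha}\times A)_{i,:,:}=\boldsymbol{\alpha}A_{i,:,:}$; analogously for 4-mode tensors, $(\boldsymbol{\mathcal{A}}\times\boldsymbol{\alpha})_{i_1,i_2,:,:}=\boldsymbol{\mathcal{A}}_{i_1,i_2,:,:}\boldsymbol{\alpha}$ and $(\boldsymbol{\alpha}\times\boldsymbol{\mathcal{A}})_{i_1,i_2,:,:}=\boldsymbol{\alpha}\boldsymbol{\mathcal{A}}_{i_1,i_2,:,:}$.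 For $\mathbf{a}\in\mathbb{C}^N$, $\mathbf{a}\otimes I_M\in\mathbb{C}^{N\times M\times M}$ has slices $(\mathbf{a}\otimes I_M)_{i,:,:}=\mathbf{a}_iI_M$. The $*$-identity $\boldsymbol{\mathcal{I}}_*\in\mathbb{C}^{n\times n\times M\times M}$ has slices $I_M$ for $i_1=i_2$ and $0$ otherwise; $\boldsymbol{\mathcal{A}}^{0_*}=\boldsymbol{\mathcal{I}}_*$ and $\boldsymbol{\mathcal{A}}^{k_*}$ is the $k$-fold $*$-product of $\boldsymbol{\mathcal{A}}$ with itself. Krylov-type subspaces: for $A,B^D\in\mathbb{C}^{N\times M\times M}$, $\mathcal{K}_n(\boldsymbol{\mathcal{A}},A)=\{\sum_{k=0}^{n-1}(\boldsymbol{\mathcal{A}}^{k_*}\times\boldsymbol{\eta}_k)*A:\boldsymbol{\eta}_k\in\mathbb{C}^{M\times M}\}$ and $\mathcal{K}_n^D(B^D,\boldsymbol{\mathcal{A}})=\{B^D*\sum_{k=0}^{n-1}(\boldsymbol{\eta}_k^H\times\boldsymbol{\mathcal{A}}^{k_*}):\boldsymbol{\eta}_k\in\mathbb{C}^{M\times M}\}$. For $V_1,\dots,V_n\in\mathbb{C}^{N\times M\times M}$, $\langle V_1,\dots,V_n\rangle=\{\sum_kV_k\times\boldsymbol{\eta}_k:\boldsymbol{\eta}_k\in\mathbb{C}^{M\times M}\}$, and for $W_1^D,\dots,W_n^D$, $\langle W_1^D,\dots,W_n^D\rangle=\{\sum_k\boldsymbol{\eta}_k\times W_k^D:\boldsymbol{\eta}_k\in\mathbb{C}^{M\times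 M}\}$. Tensor non-Hermitian Lanczos process: set $V=\mathbf{v}\otimes I_M$, $W^D=\overline{\mathbf{w}}\otimes I_M$, $V_0=W_0^D=0$, $\boldsymbol{\beta}_1=0$, $V_1=V$, $W_1^D=W^D$. For $k=1,2,\dots$: $\boldsymbol{\alpha}_k=W_k^D*\boldsymbol{\mathcal{A}}*V_k$; $\widehat W_{k+1}^D=W_k^D*\boldsymbol{\mathcal{A}}-\boldsymbol{\alpha}_k\times W_k^D-\boldsymbol{\beta}_k\times W_{k-1}^D$; $\widehat V_{k+1}=\boldsymbol{\mathcal{A}}*V_k-V_k\times\boldsymbol{\alpha}_k-V_{k-1}\times\boldsymbol{\gamma}_k$ (the term with $\boldsymbol{\gamma}_1$ vanishes since $V_0=0$); choose a nonsingular $\boldsymbol{\gamma}_{k+1}\in\mathbb{C}^{M\times M}$; $\boldsymbol{\beta}_{k+1}=\boldsymbol{\gamma}_{k+1}^{-1}(\widehat W_{k+1}^D*\widehat V_{k+1})$; if $\boldsymbol{\beta}_{k+1}$ is singular the process stops, otherwise $V_{k+1}=\widehat V_{k+1}\times\boldsymbol{\beta}_{k+1}^{-1}$ and $W_{k+1}^D=\boldsymbol{\gamma}_{k+1}^{-1}\times\widehat W_{k+1}^D$. Basis tensors: $\boldsymbol{\mathcal{V}}_n\in\mathbb{C}^{N\times n\times M\times M}$ with $(\boldsymbol{\mathcal{V}}_n)_{:,k,:,:}=V_k$ and $\boldsymbol{\mathcal{W}}_n\in\mathbb{C}^{n\times N\times M\times M}$ with $(\boldsymbol{\mathcal{W}}_n)_{k,:,:,:}=W_k^D$,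 $k=1,\dots,n$. Tridiagonal tensor $\boldsymbol{\mathcal{T}}_n\in\mathbb{C}^{n\times n\times M\times M}$: $(\boldsymbol{\mathcal{T}}_n)_{i,i,:,:}=\boldsymbol{\alpha}_i$ ($1\le i\le n$), $(\boldsymbol{\mathcal{T}}_n)_{i,i+1,:,:}=\boldsymbol{\gamma}_{i+1}$ ($1\le i\le n-1$), $(\boldsymbol{\mathcal{T}}_n)_{i,i-1,:,:}=\boldsymbol{\beta}_i$ ($2\le i\le n$), all other slices zero. *)

(* Scalars: an arbitrary numClosedFieldType C (with complex
   conjugation x^* ); the complex numbers are an instance. *)
From HB Require Import structures.
From mathcomp Require Import all_boot all_order all_algebra.
Set Implicit Arguments. Unset Strict Implicit. Unset Printing Implicit Defensive.
Import Order.TTheory GRing.Theory Num.Theory.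
Local Open Scope ring_scope.

(* 3-mode tensor (hypervector) in C^{N x M x M}: slice i is X i. *)
Definition hvec (C : numClosedFieldType) (N M : nat) := 'I_N -> 'M[C]_M.
(* 4-mode tensor in C^{N1 x N2 x M x M}: slice (i1,i2) is A i1 i2. *)
Definition tens (C : numClosedFieldType) (N1 N2 M : nat) := 'I_N1 -> 'I_N2 -> 'M[C]_M.

Section Ops.
Variables (C : numClosedFieldType) (M : nat).

Definition tmul N1 K N2 (A : tens C N1 K M) (B : tens C K N2 M) : tens C N1 N2 M :=
  fun i j => \sum_(k < K) A i k *m B k j.
Definition tvmul N1 K (A : tens C N1 K M) (X : hvec C K M) : hvec C N1 M :=
  fun i => \sum_(k < K) A i k *m X k.
Definition vtmul K N2 (B : hvec C K M) (A : tens C K N2 M) : hvec C N2 M :=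
  fun i => \sum_(k < K) B k *m A k i.
Definition hinner K (B X : hvec C K M) : 'M[C]_M := \sum_(k < K) B k *m X k.
Definition tscale_r N1 N2 (A : tens C N1 N2 M) (a : 'M[C]_M) : tens C N1 N2 M :=
  fun i j => A i j *m a.
Definition tscale_l N1 N2 (a : 'M[C]_M) (A : tens C N1 N2 M) : tens C N1 N2 M :=
  fun i j => a *m A i j.
Definition tid n : tens C n n M := fun i j => if i == j then 1%:M else 0.
Definition tpow N (A : tens C N N M) (k : nat) : tens C N N M :=
  iter k (tmul A) (@tid N).
Definition kronI N (a : 'cV[C]_N) : hvec C N M := fun i => a i 0 *: 1%:M.
Definition ctr (a : 'M[C]_M) : 'M[C]_M := (map_mx Num.conj a)^T.

Definition krylov N (A : tens C N N M) (X : hvec C N M) (n : nat) (Y : hvec C N M) : Prop :=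
  exists eta : nat -> 'M[C]_M,
    forall i, Y i = \sum_(k < n) tvmul (tscale_r (tpow A k) (eta k)) X i.
Definition krylovD N (B : hvec C N M) (A : tens C N N M) (n : nat) (Y : hvec C N M) : Prop :=
  exists eta : nat -> 'M[C]_M,
    forall i, Y i = vtmul B (fun l j => \sum_(k < n) tscale_l (ctr (eta k)) (tpow A k) l j) i.
Definition rspan N (V : nat -> hvec C N M) (n : nat) (Y : hvec C N M) : Prop :=
  exists eta : nat -> 'M[C]_M, forall i, Y i = \sum_(k < n) V k.+1 i *m eta k.+1.
Definition lspan N (W : nat -> hvec C N M) (n : nat) (Y : hvec C N M) : Prop :=
  exists eta : nat -> 'M[C]_M, forall i, Y i = \sum_(k < n) eta k.+1 *m W k.+1 i.

(* State at stage k (k >= 0): (V_k, V_{k+1}, W_k, W_{k+1}, beta_{k+1}),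
   with V_0 = W_0 = 0, beta_1 = 0, V_1 = v (x) I, W_1 = conj w (x) I.
   gam k is gamma_k.  Inverses are invmx (total); the hypotheses of the
   theorem guarantee they are genuine inverses where used. *)
Record lstate N := LState {
  sVp : hvec C N M; sVc : hvec C N M; sWp : hvec C N M; sWc : hvec C N M;
  sb : 'M[C]_M }.

Definition lstep N (A : tens C N N M) (gam : nat -> 'M[C]_M) (k : nat)
  (s : lstate N) : lstate N :=
  let a := hinner (vtmul (sWc s) A) (sVc s) in
  let Vh := fun i => tvmul A (sVc s) i - sVc s i *m a - sVp s i *m gam k.+1 in
  let Wh := fun i => vtmul (sWc s) A i - a *m sWc s i - sb s *m sWp s i in
  let g := gam k.+2 in
  let b := invmx g *m hinner Wh Vh in
  LState (sVc s) (fun i => Vh i *m invmx b) (sWc s) (fun i => invmx g *m Wh i) b.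

Fixpoint lanczos N (A : tens C N N M) (v w : 'cV[C]_N) (gam : nat -> 'M[C]_M)
  (k : nat) : lstate N :=
  match k with
  | 0 => LState (fun _ => 0) (kronI v) (fun _ => 0) (kronI (map_mx Num.conj w)) 0
  | k'.+1 => lstep A gam k' (lanczos A v w gam k')
  end.

Definition LV N A v w gam (k : nat) : hvec C N M :=
  if k is k'.+1 then sVc (@lanczos N A v w gam k') else (fun _ => 0).
Definition LW N A v w gam (k : nat) : hvec C N M :=
  if k is k'.+1 then sWc (@lanczos N A v w gam k') else (fun _ => 0).
Definition Lbeta N A v w gam (k : nat) : 'M[C]_M :=
  if k is k'.+1 then sb (@lanczos N A v w gam k') else 0.
Definition Lalpha N A v w gam (k : nat) : 'M[C]_M :=
  hinner (vtmul (@LW N A v w gam k) A) (LV A v w gam k).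

(* basis tensors (0-based index i stands for the paper's index i+1) *)
Definition Vbasis N A v w gam (n : nat) : tens C N n M :=
  fun i k => @LV N A v w gam k.+1 i.
Definition Wbasis N A v w gam (n : nat) : tens C n N M :=
  fun k i => @LW N A v w gam k.+1 i.
Definition Tn N A v w gam (n : nat) : tens C n n M :=
  fun i j =>
    if (j : nat) == i then @Lalpha N A v w gam i.+1
    else if (j : nat) == i.+1 then gam i.+2
    else if (i : nat) == j.+1 then Lbeta A v w gam i.+1
    else 0.
End Ops.

Arguments Vbasis [C M N] A v w gam n _ _.
Arguments Wbasis [C M N] A v w gam n _ _.
Arguments Tn [C M N] A v w gam n _ _.

From HB Require Import structures.
From mathcomp Require Import all_boot all_order all_algebra zify.
From Stdlib Require Import FunctionalExtensionality.
Set Implicit Arguments. Unset Strict Implicit. Unset Printing Implicit Defensive.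
Import Order.TTheory GRing.Theory Num.Theory.
Local Open Scope ring_scope.

(* Biorthogonality (a) is proved by induction: V_(k+1) is, up to an invertible
   right factor, A*V_k with its components along V_k and V_(k-1) removed, and
   dually for W_(k+1).  Under the induction hypothesis the pairings W_i*A*V_j
   with i, j <= k are exactly the entries of the tridiagonal T_k (expand A*V_j
   or W_i*A by the three-term recurrence), so these components cancel, while
   beta_(k+1) is defined precisely so that W_(k+1)*V_(k+1) = I.  The same
   pairings give (c).  For (b), the recurrence puts V_(m+1) in the span of the
   A^j*V, j <= m, and conversely; the slices of V = v (x) I are scalar, so they
   commute with the coefficients.  Transposing all slices turns the left action
   of A into the right action of its slice-transpose, reducing the statement
   for the W_k to the one for the V_k. *)

Section HyperSpan.
Variables (C : numClosedFieldType) (N M : nat).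
Local Notation hv := (hvec C N M).

Definition hspan (F : nat -> hv) (k : nat) (Y : hv) : Prop :=
  exists eta : nat -> 'M[C]_M, forall i, Y i = \sum_(m < k) F m i *m eta m.

Lemma hspan_ext F k (Y Y' : hv) : (forall i, Y i = Y' i) -> hspan F k Y -> hspan F k Y'.
Proof. by move=> eY [eta h]; exists eta => i; rewrite -eY h. Qed.

Lemma hspan0 F k (Y : hv) : (forall i, Y i = 0) -> hspan F k Y.
Proof.
by move=> Y0; exists (fun _ => 0) => i; rewrite Y0 big1 // => m _; rewrite mulmx0.
Qed.

Lemma hspanD F k (Y Z : hv) :
  hspan F k Y -> hspan F k Z -> hspan F k (fun i => Y i + Z i).
Proof.
move=> [e1 h1] [e2 h2]; exists (fun m => e1 m + e2 m) => i.
by rewrite h1 h2 -big_split; apply: eq_bigr => m _; rewrite mulmxDr.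
Qed.

Lemma hspanMr F k (Y : hv) a : hspan F k Y -> hspan F k (fun i => Y i *m a).
Proof.
move=> [e h]; exists (fun m => e m *m a) => i.
by rewrite h mulmx_suml; apply: eq_bigr => m _; rewrite mulmxA.
Qed.

Lemma hspanB F k (Y Z : hv) :
  hspan F k Y -> hspan F k Z -> hspan F k (fun i => Y i - Z i).
Proof.
move=> hY hZ; apply: hspan_ext (hspanD hY (hspanMr (- 1%:M) hZ)) => i.
by rewrite mulmxN mulmx1.
Qed.

Lemma mem_hspan F k m : (m < k)%N -> hspan F k (F m).
Proof.
move=> mk; exists (fun l => if l == m then 1%:M else 0) => i.
rewrite (bigD1 (Ordinal mk)) //= eqxx mulmx1 big1 ?addr0 // => l.
by rewrite -val_eqE /= => /negbTE ->; rewrite mulmx0.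
Qed.

Lemma hspan_trans F G k k' Y :
  (forall m, (m < k)%N -> hspan G k' (F m)) -> hspan F k Y -> hspan G k' Y.
Proof.
move=> FG [e eY].
suff : hspan G k' (fun i => \sum_(m < k) F m i *m e m) by apply: hspan_ext => i.
elim: k FG {eY} => [|k IH] FG; first by apply: hspan0 => i; rewrite big_ord0.
apply: hspan_ext; first by move=> i; rewrite big_ord_recr; reflexivity.
apply: hspanD; last exact: hspanMr (FG _ (ltnSn k)).
by apply: IH => m mk; apply: FG; apply: ltnW.
Qed.

Lemma hspanS F k k' Y : (k <= k')%N -> hspan F k Y -> hspan F k' Y.
Proof. by move=> kk'; apply: hspan_trans => m mk; apply: mem_hspan; apply: leq_trans kk'. Qed.

End HyperSpan.

Section ThreeTermKrylov.
Variables (C : numClosedFieldType) (N M : nat).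
Local Notation hv := (hvec C N M).
Variables (Op : hv -> hv) (X : nat -> hv) (n : nat).

Hypothesis Op_lin : forall k (F : nat -> hv) (e : nat -> 'M[C]_M),
  Op (fun j => \sum_(m < k) F m j *m e m) = fun i => \sum_(m < k) Op (F m) i *m e m.
Hypothesis X0 : forall i, X 0 i = 0.
Hypothesis X_succ : forall m, (0 < m < n)%N -> exists a b c,
  forall i, X m.+1 i = (Op (X m) i - X m i *m a - X m.-1 i *m b) *m c.
Hypothesis Op_X : forall m, (0 < m < n)%N -> exists a b c,
  forall i, Op (X m) i = X m.+1 i *m a + X m i *m b + X m.-1 i *m c.

Local Notation basis := (fun m => X m.+1).
Local Notation krylov_seq := (fun m => iter m Op (X 1)).

Lemma hspan_Op F k Y : hspan F k Y -> hspan (fun m => Op (F m)) k (Op Y).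
Proof.
move=> [e eY]; exists e => i.
have -> : Y = fun j => \sum_(m < k) F m j *m e m by apply: functional_extensionality.
by rewrite Op_lin.
Qed.

Lemma krylov_Op k Y : hspan krylov_seq k Y -> hspan krylov_seq k.+1 (Op Y).
Proof. by move=> /hspan_Op; apply: hspan_trans => m mk; apply: (mem_hspan _ (m := m.+1)). Qed.

Lemma basis_Op k Y : (k < n)%N -> hspan basis k Y -> hspan basis k.+1 (Op Y).
Proof.
move=> kn /hspan_Op; apply: hspan_trans => m mk.
have [|a [b [c OpXm]]] := Op_X (m := m.+1); first by rewrite /= (leq_ltn_trans mk).
apply: hspan_ext (fun i => esym (OpXm i)) _.
apply: hspanD; first apply: hspanD; apply: hspanMr.
- exact: (mem_hspan _ (m := m.+1)).
- exact: (mem_hspan _ (m := m)) (ltnW _).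
- case: m mk {OpXm} => [|m] mk; first exact: hspan0.
  by apply: (mem_hspan _ (m := m)); rewrite ltnW // ltnW.
Qed.

Lemma basis_in_krylov m : (m < n)%N ->
  hspan krylov_seq m (X m) /\ hspan krylov_seq m.+1 (X m.+1).
Proof.
elim: m => [|m IH] mn; first by split; [apply: hspan0 | apply: (mem_hspan _ (m := 0))].
have [XmK Xm1K] := IH (ltnW mn); split=> //.
have [//|a [b [c XS]]] := X_succ (m := m.+1).
apply: hspan_ext (fun i => esym (XS i)) _.
apply/hspanMr/hspanB; first apply: hspanB.
- exact: krylov_Op.
- exact/hspanMr/(hspanS (leqnSn _)).
- by apply/hspanMr/(hspanS _ XmK); rewrite ltnW.
Qed.

Lemma krylov_in_basis m : (m < n)%N -> hspan basis m.+1 (iter m Op (X 1)).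
Proof.
elim: m => [|m IH] mn; first exact: (mem_hspan _ (m := 0)).
exact: basis_Op mn (IH (ltnW mn)).
Qed.

Lemma hspan_basis_krylov Y : hspan basis n Y <-> hspan krylov_seq n Y.
Proof.
split; apply: hspan_trans => m mn.
- exact: hspanS mn (proj2 (basis_in_krylov mn)).
- exact: hspanS mn (krylov_in_basis mn).
Qed.

End ThreeTermKrylov.

Section TensorAlgebra.
Variables (C : numClosedFieldType) (M : nat).

Definition ttr N1 N2 (A : tens C N1 N2 M) : tens C N2 N1 M := fun i k => (A k i)^T.
Definition htr N (X : hvec C N M) : hvec C N M := fun i => (X i)^T.

Lemma tvmul_sumr N1 K (A : tens C N1 K M) k (F : nat -> hvec C K M) (e : nat -> 'M[C]_M) :
  tvmul A (fun j => \sum_(m < k) F m j *m e m) = fun i => \sum_(m < k) tvmul A (F m) i *m e m.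
Proof.
apply: functional_extensionality => i; rewrite /tvmul.
under eq_bigr do rewrite mulmx_sumr.
rewrite exchange_big; apply: eq_bigr => m _.
by rewrite mulmx_suml; apply: eq_bigr => l _; rewrite mulmxA.
Qed.

Lemma tvmul_tid N (X : hvec C N M) : tvmul (@tid C M N) X = X.
Proof.
apply: functional_extensionality => i.
rewrite /tvmul (bigD1 i) //= /tid eqxx mul1mx big1 ?addr0 // => l.
by rewrite eq_sym => /negbTE ->; rewrite mul0mx.
Qed.

Lemma vtmul_tid N (X : hvec C N M) : vtmul X (@tid C M N) = X.
Proof.
apply: functional_extensionality => i.
rewrite /vtmul (bigD1 i) //= /tid eqxx mulmx1 big1 ?addr0 // => l.
by move=> /negbTE ->; rewrite mulmx0.
Qed.

Lemma tvmul_tmul N1 K N2 (A : tens C N1 K M) (B : tens C K N2 M) X :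
  tvmul (tmul A B) X = tvmul A (tvmul B X).
Proof.
apply: functional_extensionality => i; rewrite /tvmul /tmul.
under eq_bigr do rewrite mulmx_suml.
rewrite exchange_big; apply: eq_bigr => m _.
by rewrite mulmx_sumr; apply: eq_bigr => l _; rewrite mulmxA.
Qed.

Lemma vtmul_tmul N1 K N2 X (A : tens C N1 K M) (B : tens C K N2 M) :
  vtmul X (tmul A B) = vtmul (vtmul X A) B.
Proof.
apply: functional_extensionality => i; rewrite /vtmul /tmul.
under eq_bigr do rewrite mulmx_sumr.
rewrite exchange_big; apply: eq_bigr => m _.
by rewrite mulmx_suml; apply: eq_bigr => l _; rewrite mulmxA.
Qed.

Lemma htr_vtmul K N2 (X : hvec C K M) (A : tens C K N2 M) :
  htr (vtmul X A) = tvmul (ttr A) (htr X).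
Proof.
apply: functional_extensionality => i; rewrite /htr /vtmul /tvmul /ttr linear_sum /=.
by apply: eq_bigr => k _; rewrite trmx_mul.
Qed.

Lemma tvmul_tpow N (A : tens C N N M) k X : tvmul (tpow A k) X = iter k (tvmul A) X.
Proof. by elim: k => [|k IH]; rewrite ?tvmul_tid //= tvmul_tmul IH. Qed.

Lemma htr_vtmul_tpow N (A : tens C N N M) k X :
  htr (vtmul X (tpow A k)) = iter k (tvmul (ttr A)) (htr X).
Proof.
elim: k X => [|k IH] X; first by rewrite /= vtmul_tid.
by rewrite /tpow iterS -/(tpow A k) vtmul_tmul IH iterSr htr_vtmul.
Qed.

Section Inner.
Variable K : nat.
Implicit Types X Y : hvec C K M.

Lemma hinnerMl a X Y : hinner (fun i => a *m X i) Y = a *m hinner X Y.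
Proof. by rewrite /hinner mulmx_sumr; apply: eq_bigr => k _; rewrite mulmxA. Qed.
Lemma hinnerMr a X Y : hinner X (fun i => Y i *m a) = hinner X Y *m a.
Proof. by rewrite /hinner mulmx_suml; apply: eq_bigr => k _; rewrite mulmxA. Qed.
Lemma hinnerDl X X' Y : hinner (fun i => X i + X' i) Y = hinner X Y + hinner X' Y.
Proof. by rewrite /hinner -big_split; apply: eq_bigr => k _; rewrite mulmxDl. Qed.
Lemma hinnerDr X Y Y' : hinner X (fun i => Y i + Y' i) = hinner X Y + hinner X Y'.
Proof. by rewrite /hinner -big_split; apply: eq_bigr => k _; rewrite mulmxDr. Qed.
Lemma hinnerBl X X' Y : hinner (fun i => X i - X' i) Y = hinner X Y - hinner X' Y.
Proof. by rewrite /hinner -sumrB; apply: eq_bigr => k _; rewrite mulmxBl. Qed.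
Lemma hinnerBr X Y Y' : hinner X (fun i => Y i - Y' i) = hinner X Y - hinner X Y'.
Proof. by rewrite /hinner -sumrB; apply: eq_bigr => k _; rewrite mulmxBr. Qed.
Lemma hinner0l Y : hinner (fun _ => 0) Y = 0.
Proof. by rewrite /hinner big1 // => k _; rewrite mul0mx. Qed.
Lemma hinner0r X : hinner X (fun _ => 0) = 0.
Proof. by rewrite /hinner big1 // => k _; rewrite mulmx0. Qed.

Lemma hinner_vtmul N2 X (A : tens C K N2 M) (Y : hvec C N2 M) :
  hinner (vtmul X A) Y = hinner X (tvmul A Y).
Proof.
rewrite /hinner /vtmul /tvmul.
under eq_bigr do rewrite mulmx_suml.
rewrite exchange_big; apply: eq_bigr => l _.
by rewrite mulmx_sumr; apply: eq_bigr => k _; rewrite mulmxA.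
Qed.

End Inner.
End TensorAlgebra.

Section Tridiagonal.
Variables (R : pzRingType) (M : nat).

Definition kdelta (i j : nat) : 'M[R]_M := if i == j then 1%:M else 0.

Lemma kdelta_neq i j : i != j -> kdelta i j = 0.
Proof. by rewrite /kdelta => /negbTE ->. Qed.

Definition tridiag (a g b : nat -> 'M[R]_M) (i j : nat) : 'M[R]_M :=
  if j == i then a i else if j == i.+1 then g j else if i == j.+1 then b i else 0.

Local Ltac decide_nat_eqs := repeat match goal with
  | |- context [?x == ?y :> nat] =>
      (rewrite (_ : (x == y) = true); last by apply/eqP; lia) ||
      (rewrite (_ : (x == y) = false); last by apply/eqP; lia) end.

Lemma tridiag_expand_r a g b i j : (0 < i)%N ->
  kdelta i j.+1 *m b j.+1 + kdelta i j *m a j + kdelta i j.-1 *m g j = tridiag a g b i j.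
Proof.
move=> i0; rewrite /kdelta /tridiag.
have [e|ne1] := eqVneq i j.+1; decide_nat_eqs.
  by rewrite e mul1mx !mul0mx !addr0.
have [e|ne2] := eqVneq i j; decide_nat_eqs.
  by rewrite e mul1mx !mul0mx add0r addr0.
have [e|ne3] := eqVneq j i.+1; decide_nat_eqs.
  by rewrite mul1mx !mul0mx !add0r.
by rewrite !mul0mx !addr0.
Qed.

Lemma tridiag_expand_l a g b i j : (0 < j)%N ->
  g i.+1 *m kdelta i.+1 j + a i *m kdelta i j + b i *m kdelta i.-1 j = tridiag a g b i j.
Proof.
move=> j0; rewrite /kdelta /tridiag.
have [e|ne1] := eqVneq j i.+1; decide_nat_eqs.
  by rewrite e mulmx1 !mulmx0 !addr0.
have [e|ne2] := eqVneq j i; decide_nat_eqs.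
  by rewrite mulmx1 !mulmx0 add0r addr0.
have [e|ne3] := eqVneq i j.+1; decide_nat_eqs.
  by rewrite mulmx1 !mulmx0 !add0r.
by rewrite !mulmx0 !addr0.
Qed.

End Tridiagonal.

Arguments kdelta {R M} i j.

Section DefinedSpans.
Variables (C : numClosedFieldType) (N M : nat).
Local Notation hv := (hvec C N M).

Lemma rspan_hspan (F : nat -> hv) n Y : rspan F n Y <-> hspan (fun m => F m.+1) n Y.
Proof. by split=> [[e h]|[e h]]; [exists (fun m => e m.+1) | exists (fun m => e m.-1)]. Qed.

Lemma lspan_hspan (F : nat -> hv) n Y :
  lspan F n Y <-> hspan (fun m => htr (F m.+1)) n (htr Y).
Proof.
split=> [[e h]|[e h]].
  exists (fun m => (e m.+1)^T) => i; rewrite /htr h linear_sum /=.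
  by apply: eq_bigr => m _; rewrite trmx_mul.
exists (fun m => (e m.-1)^T) => i; apply: trmx_inj; rewrite [LHS]h linear_sum /=.
by apply: eq_bigr => m _; rewrite trmx_mul trmxK.
Qed.

Lemma krylov_kronI (A : tens C N N M) (a : 'cV[C]_N) n Y :
  krylov A (kronI M a) n Y <-> hspan (fun m => iter m (tvmul A) (kronI M a)) n Y.
Proof.
have tscale_kronI P e i : tvmul (tscale_r P e) (kronI M a) i = tvmul P (kronI M a) i *m e.
  rewrite /tvmul /tscale_r /kronI mulmx_suml; apply: eq_bigr => l _.
  by rewrite -!scalemxAr !mulmx1 scalemxAl.
split=> [[e h]|[e h]]; exists e => i; rewrite h; apply: eq_bigr => m _;
  by rewrite tscale_kronI tvmul_tpow.
Qed.

Lemma ctr_conj (e : 'M[C]_M) : ctr (map_mx Num.conj e) = e^T.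
Proof. by apply/matrixP => i j; rewrite !mxE conjCK. Qed.

Lemma krylovD_kronI (A : tens C N N M) (a : 'cV[C]_N) n Y :
  krylovD (kronI M a) A n Y <->
  hspan (fun m => iter m (tvmul (ttr A)) (htr (kronI M a))) n (htr Y).
Proof.
have vtmul_sum c i : vtmul (kronI M a) (fun l j => \sum_(k < n) tscale_l (c k) (tpow A k) l j) i
    = \sum_(k < n) c k *m vtmul (kronI M a) (tpow A k) i.
  rewrite /vtmul /tscale_l /kronI; under eq_bigr do rewrite mulmx_sumr.
  rewrite exchange_big; apply: eq_bigr => k _; rewrite mulmx_sumr; apply: eq_bigr => l _.
  by rewrite scalemx1 !mulmxA scalar_mxC.
split=> [[e h]|[e h]].
  exists (fun m => (ctr (e m))^T) => i; rewrite /htr h vtmul_sum linear_sum /=.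
  by apply: eq_bigr => m _; rewrite trmx_mul -htr_vtmul_tpow.
exists (fun m => map_mx Num.conj (e m)) => i; apply: trmx_inj.
rewrite vtmul_sum linear_sum [LHS]h /=; apply: eq_bigr => m _.
by rewrite trmx_mul ctr_conj trmxK -htr_vtmul_tpow.
Qed.

End DefinedSpans.

Section Lanczos.
Variables (C : numClosedFieldType) (N M : nat) (A : tens C N N M) (v w : 'cV[C]_N)
  (gam : nat -> 'M[C]_M).
Local Notation hv := (hvec C N M).
Local Notation V := (LV A v w gam).
Local Notation W := (LW A v w gam).
Local Notation al := (Lalpha A v w gam).
Local Notation be := (Lbeta A v w gam).

Definition LVhat k : hv := fun i => tvmul A (V k) i - V k i *m al k - V k.-1 i *m gam k.
Definition LWhat k : hv := fun i => vtmul (W k) A i - al k *m W k i - be k *m W k.-1 i.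

Lemma LV_succ k : (0 < k)%N -> V k.+1 = fun i => LVhat k i *m invmx (be k.+1).
Proof. by case: k => // -[|k]. Qed.

Lemma LW_succ k : (0 < k)%N -> W k.+1 = fun i => invmx (gam k.+1) *m LWhat k i.
Proof. by case: k => // -[|k]. Qed.

Lemma Lbeta_succ k : (0 < k)%N -> be k.+1 = invmx (gam k.+1) *m hinner (LWhat k) (LVhat k).
Proof. by case: k => // -[|k]. Qed.

Hypothesis gam_unit : forall k, (2 <= k)%N -> gam k \in unitmx.

Lemma tvmul_LV k : (0 < k)%N -> be k.+1 \in unitmx ->
  tvmul A (V k) = fun i => V k.+1 i *m be k.+1 + V k i *m al k + V k.-1 i *m gam k.
Proof.
move=> k0 bu; apply: functional_extensionality => i.
by rewrite LV_succ // mulmxKV // /LVhat addrAC !subrK.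
Qed.

Lemma vtmul_LW k : (0 < k)%N ->
  vtmul (W k) A = fun i => gam k.+1 *m W k.+1 i + al k *m W k i + be k *m W k.-1 i.
Proof.
move=> k0; apply: functional_extensionality => i.
by rewrite LW_succ // mulKVmx ?gam_unit // /LWhat addrAC !subrK.
Qed.

Definition biorth k := forall i j, (0 < i <= k)%N -> (0 < j <= k)%N ->
  hinner (W i) (V j) = kdelta i j.

Lemma biorthE_l k i j : biorth k -> (0 < i <= k)%N -> (j <= k)%N ->
  hinner (W i) (V j) = kdelta i j.
Proof.
move=> Bk ik; case: j => [|j] jk; last exact: Bk.
by rewrite hinner0r /kdelta; case: i ik.
Qed.

Lemma biorthE_r k i j : biorth k -> (i <= k)%N -> (0 < j <= k)%N ->
  hinner (W i) (V j) = kdelta i j.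
Proof.
move=> Bk; case: i => [|i] ik jk; last exact: Bk.
by rewrite hinner0l /kdelta; case: j jk.
Qed.

Variable n : nat.
Hypothesis be_unit : forall k, (2 <= k <= n)%N -> be k \in unitmx.

Lemma hinner_W_AV k i j : biorth k -> (k <= n)%N -> (0 < i <= k)%N -> (0 < j <= k)%N ->
  hinner (W i) (tvmul A (V j)) = tridiag al gam be i j.
Proof.
move=> Bk kn ik /andP[j0 jk].
have [jk'|] := ltnP j k.
  have bu : be j.+1 \in unitmx by apply: be_unit; rewrite ltnS j0 (leq_trans jk').
  rewrite (tvmul_LV j0 bu) !hinnerDr !hinnerMr.
  by rewrite !(biorthE_l Bk ik) ?tridiag_expand_r //; lia.
move=> kj; have -> : j = k by lia.
have [ik'|ki] := ltnP i k.
  rewrite -hinner_vtmul vtmul_LW; last lia.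
  rewrite !hinnerDl !hinnerMl.
  by rewrite !(biorthE_r Bk) ?tridiag_expand_l //; lia.
have -> : i = k by lia.
by rewrite -hinner_vtmul /tridiag eqxx.
Qed.

Section Step.
Variable k : nat.
Hypotheses (k0 : (0 < k)%N) (kn : (k < n)%N) (Bk : biorth k).

Lemma hinner_W_Vsucc i : (0 < i <= k)%N -> hinner (W i) (V k.+1) = 0.
Proof.
move=> ik; rewrite LV_succ // hinnerMr /LVhat !hinnerBr !hinnerMr.
rewrite (hinner_W_AV Bk (ltnW kn) ik); last by rewrite k0 leqnn.
rewrite -tridiag_expand_r; last by case/andP: ik.
rewrite !(biorthE_l Bk ik) ?leq_pred // kdelta_neq; last lia.
by rewrite mul0mx add0r addrAC addrK subrr mul0mx.
Qed.

Lemma hinner_Wsucc_V j : (0 < j <= k)%N -> hinner (W k.+1) (V j) = 0.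
Proof.
move=> jk; rewrite LW_succ // hinnerMl /LWhat !hinnerBl !hinnerMl hinner_vtmul.
rewrite (hinner_W_AV Bk (ltnW kn) _ jk); last by rewrite k0 leqnn.
rewrite -tridiag_expand_l; last by case/andP: jk.
rewrite !(biorthE_r Bk _ jk) ?leq_pred // kdelta_neq; last lia.
by rewrite mulmx0 add0r addrAC addrK subrr mulmx0.
Qed.

Lemma hinner_Wsucc_Vsucc : hinner (W k.+1) (V k.+1) = 1%:M.
Proof.
rewrite LW_succ // LV_succ // hinnerMl hinnerMr mulmxA -Lbeta_succ // mulmxV //.
by apply: be_unit; rewrite ltnS k0.
Qed.

Lemma biorth_succ : biorth k.+1.
Proof.
move=> i j ik jk.
have [ik'|ki] := leqP i k; have [jk'|kj] := leqP j k.
- by apply: Bk; lia.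
- have -> : j = k.+1 by lia.
  by rewrite hinner_W_Vsucc ?kdelta_neq //; lia.
- have -> : i = k.+1 by lia.
  by rewrite hinner_Wsucc_V ?kdelta_neq //; lia.
- have -> : i = k.+1 by lia.
  have -> : j = k.+1 by lia.
  by rewrite hinner_Wsucc_Vsucc /kdelta eqxx.
Qed.

End Step.

Hypothesis wv : \sum_(i < N) Num.conj (w i 0) * v i 0 = 1.

Lemma biorth1 : biorth 1.
Proof.
move=> i j ik jk; have -> : i = 1%N by lia.
have -> : j = 1%N by lia.
rewrite /kdelta eqxx /hinner /= /kronI.
under eq_bigr do rewrite -scalemxAl mul1mx scalerA mxE.
by rewrite -scaler_suml wv scale1r.
Qed.

Lemma biorth_n : (0 < n)%N -> biorth n.
Proof.
move=> n0; suff Bk : forall k, (0 < k <= n)%N -> biorth k by apply: Bk; rewrite n0 leqnn.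
elim=> [//|[_ _|k IH] kn]; first exact: biorth1.
by apply: biorth_succ => //; apply: IH; lia.
Qed.

Lemma rspan_LV_krylov Y : rspan V n Y <-> krylov A (kronI M v) n Y.
Proof.
rewrite rspan_hspan krylov_kronI; apply: hspan_basis_krylov => //.
- exact: tvmul_sumr.
- move=> m /andP[m0 mn]; exists (al m), (gam m), (invmx (be m.+1)) => i.
  by rewrite LV_succ.
- move=> m /andP[m0 mn]; exists (be m.+1), (al m), (gam m) => i.
  by rewrite tvmul_LV // be_unit // ltnS m0.
Qed.

Lemma lspan_LW_krylovD Y : lspan W n Y <-> krylovD (kronI M (map_mx Num.conj w)) A n Y.
Proof.
rewrite lspan_hspan krylovD_kronI.
apply: (hspan_basis_krylov (X := fun m => htr (W m))) => //.
- exact: tvmul_sumr.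
- by move=> i; rewrite /htr trmx0.
- move=> m /andP[m0 _]; exists (al m)^T, (be m)^T, (invmx (gam m.+1))^T => i.
  rewrite /htr LW_succ // trmx_mul /LWhat !linearB /= !trmx_mul.
  by rewrite -[(vtmul _ A i)^T]/(htr _ i) htr_vtmul.
- move=> m /andP[m0 _]; exists (gam m.+1)^T, (al m)^T, (be m)^T => i.
  by rewrite -htr_vtmul /htr vtmul_LW // !linearD /= !trmx_mul.
Qed.

Lemma Wbasis_Vbasis : (0 < n)%N ->
  tmul (Wbasis A v w gam n) (Vbasis A v w gam n) = @tid C M n.
Proof.
move=> n0; apply: functional_extensionality => i; apply: functional_extensionality => j.
by rewrite -[LHS]/(hinner (W i.+1) (V j.+1)) biorth_n ?ltn_ord.
Qed.

Lemma Tn_Wbasis_A_Vbasis : (0 < n)%N ->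
  Tn A v w gam n = tmul (tmul (Wbasis A v w gam n) A) (Vbasis A v w gam n).
Proof.
move=> n0; apply: functional_extensionality => i; apply: functional_extensionality => j.
rewrite -[RHS]/(hinner (vtmul (W i.+1) A) (V j.+1)) hinner_vtmul.
rewrite (hinner_W_AV (biorth_n n0)) ?ltn_ord //.
rewrite /tridiag /Tn !eqSS; have [->|//] := eqVneq (j : nat) i.+1.
by rewrite (gtn_eqF (ltnSn i)).
Qed.

End Lanczos.

Theorem mainTheorem2 (C : numClosedFieldType) (N M : nat)
  (A : tens C N N M) (v w : 'cV[C]_N) (gam : nat -> 'M[C]_M) (n : nat) :
  \sum_(i < N) Num.conj (w i 0) * v i 0 = 1 ->
  (forall k, (2 <= k)%N -> gam k \in unitmx) ->
  (1 <= n)%N ->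
  (forall k, (2 <= k <= n)%N -> Lbeta A v w gam k \in unitmx) ->
  (* (a) *)
  ((forall j k, (1 <= j <= n)%N -> (1 <= k <= n)%N ->
      hinner (LW A v w gam k) (LV A v w gam j) = if k == j then 1%:M else 0)
   /\ tmul (Wbasis A v w gam n) (Vbasis A v w gam n) = @tid C M n)
  (* (b) *)
  /\ (forall Y, rspan (LV A v w gam) n Y <-> krylov A (kronI M v) n Y)
  /\ (forall Y, lspan (LW A v w gam) n Y <->
                krylovD (kronI M (map_mx Num.conj w)) A n Y)
  (* (c) *)
  /\ Tn A v w gam n = tmul (tmul (Wbasis A v w gam n) A) (Vbasis A v w gam n).
Proof.
move=> wv gam_unit n0 be_unit.
split; [split|split; [|split]].
- by move=> j k jn kn; apply: (biorth_n gam_unit be_unit wv n0).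
- exact: (Wbasis_Vbasis gam_unit be_unit wv n0).
- exact: (rspan_LV_krylov be_unit).
- by move=> Y; apply: lspan_LW_krylovD.
- exact: (Tn_Wbasis_A_Vbasis gam_unit be_unit wv n0).
Qed.
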